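(* Let $T$ be a tree in which every non-leaf vertex has degree 3, and let $S_{in}\uplus S_{out}$ be a partition of the set of leaves of $T$. If $|S_{out}|$ is odd, then $T$ has an independent set $S$ with $S_{in}\subseteq S$ and $S\cap S_{out}=\emptyset$ such that each component of $T-S$ contains at most one leaf of $T$.
   Context: A leaf of $T$ is a vertex of degree at most 1 in $T$ (so a one-vertex tree has its vertex as a leaf). *)

From mathcomp Require Import all_boot.
Set Implicit Arguments. Unset Strict Implicit. Unset Printing Implicit Defensive.

Section Graphs.
Variable V : finType.

Definition simple_graph (e : rel V) : Prop := symmetric e /\ irreflexive e.

Definition has_cycle (e : rel V) : Prop :=
  exists c : seq V, 3 <= size c /\ ucycle e c.

Definition is_tree (e : rel V) : Prop :=
  [/\ simple_graph e, 0 < #|V|, (forall x y : V, connect e x y) & ~ has_cycle e].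

Definition deg (e : rel V) (x : V) : nat := #|[set y | e x y]|.

Definition leaves (e : rel V) : {set V} := [set x | deg e x <= 1].

Definition independent (e : rel V) (S : {set V}) : Prop :=
  forall x y, x \in S -> y \in S -> ~~ e x y.

Definition del_rel (e : rel V) (S : {set V}) : rel V :=
  fun x y => [&& e x y, x \notin S & y \notin S].

End Graphs.

From mathcomp Require Import all_boot.
Set Implicit Arguments. Unset Strict Implicit. Unset Printing Implicit Defensive.

(* Orient each edge uw of T by the parity of the number of S_out-leaves in the
   branch of T at u containing w (the component of T - u containing w).  As
   |S_out| is odd, the two orientations of an edge have opposite parities, a leaf
   x sees parity [x \notin S_out] towards its neighbour, and at a degree-3 vertex
   outside S_out the three branch parities add up to an odd number.  Let S be the
   set of vertices outside S_out all of whose branches are odd; it is independent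
   and contains S_in.  Along a path of T - S leaving a leaf of S_out every edge is
   even: at an internal vertex b the edge back is odd and, as b is not in S, some
   edge at b is even, so by the degree-3 parity count the next edge is even.  An
   even edge cannot end at a leaf outside S, which lies in S_out and would see an
   odd edge back; hence no path of T - S joins two distinct leaves. *)

Lemma card_setI_sum (T : finType) (A B : {set T}) :
  #|A :&: B| = \sum_(z in A) (z \in B).
Proof.
rewrite -sum1_card big_mkcond [RHS]big_mkcond /=; apply: eq_bigr => z _.
by rewrite inE; case: (z \in A); case: (z \in B).
Qed.

Lemma two_neighbors_not_leaf (V : finType) (e : rel V) x a b :
  e x a -> e x b -> a != b -> x \notin leaves e.
Proof.
move=> xa xb ab; rewrite inE /deg -ltnNge.
have : [set a; b] \subset [set y | e x y].
  by apply/subsetP => z; rewrite !inE => /orP[] /eqP ->.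
by move/subset_leq_card; rewrite cards2 ab.
Qed.

Section DeletedVertices.
Variables (V : finType) (e : rel V).
Implicit Types (S : {set V}) (u w x y z : V) (p : seq V).

Lemma sub_del_rel S : subrel (del_rel e S) e.
Proof. by move=> x y /and3P[]. Qed.

Lemma del_rel_set0 : del_rel e set0 =2 e.
Proof. by move=> x y; rewrite /del_rel !inE !andbT. Qed.

Lemma del_rel_sym S : symmetric e -> symmetric (del_rel e S).
Proof. by move=> esym x y; rewrite /del_rel esym [(x \notin S) && _]andbC. Qed.

Lemma del_rel_path S x p : x \notin S ->
  path (del_rel e S) x p = path e x p && all [predC S] p.
Proof.
elim: p x => //= y p IH x xS; rewrite /del_rel xS /=.
case yS: (y \in S); rewrite /= ?andbF //.
by rewrite andbT -/(del_rel e S) IH ?yS // andbA.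
Qed.

Lemma connect_del_rel_notin S x y :
  connect (del_rel e S) x y -> x \notin S -> y \notin S.
Proof.
move=> /connectP[p + ->] xS; rewrite del_rel_path // => /andP[_ pS].
have /allP : all [predC S] (x :: p) by rewrite /= xS.
by apply; apply: mem_last.
Qed.

Lemma connect_del_rel_subset S S' : S \subset S' ->
  subrel (connect (del_rel e S')) (connect (del_rel e S)).
Proof.
move=> sSS'; apply: connect_sub => x y /and3P[xy xS' yS']; apply: connect1.
by rewrite /del_rel xy !(contra (subsetP sSS' _)).
Qed.

Lemma connect_del_rel_setU S S' x y :
  (forall v, connect (del_rel e S) x v -> v \notin S') ->
  connect (del_rel e S) x y -> connect (del_rel e (S :|: S')) x y.
Proof.
move=> avoidS' /connectP[p xp ->]; apply/connectP; exists p => //.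
apply: (sub_in_path (P := [predC S'])) (xp).
  move=> a b; rewrite !inE => aS' bS' /and3P[ab aS bS].
  by rewrite /del_rel ab !inE !negb_or aS bS aS' bS'.
by apply/allP => v /(path_connect xp) /avoidS'.
Qed.

Lemma connect_del_rel_first_step S u z :
  connect (del_rel e S) u z -> z != u ->
  exists2 w, del_rel e S u w & connect (del_rel e (u |: S)) w z.
Proof.
move=> /connectP[p up ->].
case: (shortenP up) => -[|w q] /=; first by rewrite eqxx.
move=> /andP[uw wq] /andP[]; rewrite inE negb_or => /andP[uw' uq] _ _ _.
exists w => //; apply/connectP; exists q => //.
case/and3P: uw => _ _ wS.
move: wq; rewrite !del_rel_path ?inE ?negb_or 1?eq_sym ?uw' // => /andP[-> qS].
apply/allP => x xq; rewrite !inE negb_or [_ \notin S](allP qS) // andbT.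
by apply: contraNneq uq => <-.
Qed.

End DeletedVertices.

Section Tree.
Variables (V : finType) (e : rel V).
Hypotheses (esym : symmetric e) (eirr : irreflexive e).
Hypothesis econn : forall x y, connect e x y.
Hypothesis eacyc : ~ has_cycle e.
Implicit Types (u w x z : V) (A : {set V}).

Definition branch u w := [set z | connect (del_rel e [set u]) w z].

Lemma neighbor_neq u w : e u w -> w != u.
Proof. by apply: contraTneq => ->; rewrite eirr. Qed.

Lemma adjacent_connected_eq u w1 w2 : e u w1 -> e u w2 ->
  connect (del_rel e [set u]) w1 w2 -> w1 = w2.
Proof.
move=> uw1 uw2 /connectP[p w1p w2E]; case: (shortenP w1p) w2E uw2 => -[//|w q].
(* a shortest path from w1 to w2 != w1 avoiding u closes a cycle through u *)
rewrite del_rel_path ?inE ?neighbor_neq // => /andP[w1q qu] uniq_w1q _ -> uw2.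
exfalso; apply: eacyc; exists [:: u, w1, w & q]; split => //.
rewrite /ucycle [cycle _ _]/= rcons_path cons_uniq uniq_w1q uw1 andbT.
move: w1q uw2 => /= /andP[-> ->]; rewrite esym => -> /=.
rewrite inE negb_or eq_sym neighbor_neq //=.
by apply/negP => /(allP qu); rewrite !inE eqxx.
Qed.

Lemma branch_neighbor_uniq u w1 w2 z : e u w1 -> e u w2 ->
  z \in branch u w1 -> z \in branch u w2 -> w1 = w2.
Proof.
move=> uw1 uw2; rewrite !inE => w1z w2z; apply: (adjacent_connected_eq uw1 uw2).
by apply: connect_trans w1z _; rewrite (sym_connect_sym (del_rel_sym _ esym)).
Qed.

Lemma notin_branch u w : e u w -> u \notin branch u w.
Proof.
move=> uw; rewrite inE; apply/negP => /connect_del_rel_notin.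
by rewrite !inE eqxx neighbor_neq // => /(_ isT).
Qed.

Lemma mem_branch u z : z != u -> exists2 w, e u w & z \in branch u w.
Proof.
move=> zu.
have /connect_del_rel_first_step[//|w uw] : connect (del_rel e set0) u z.
  by rewrite (eq_connect (@del_rel_set0 _ e)).
by rewrite setU0 => wz; exists w; [apply: sub_del_rel uw | rewrite inE].
Qed.

Lemma branch_compl u w : e u w -> branch w u = ~: branch u w.
Proof.
move=> uw; apply/setP => z; rewrite [in RHS]inE; apply/idP/idP.
  rewrite inE => uz; apply/negP => wz.
  have zu : z != u by apply: contraTneq wz => ->; apply: notin_branch.
  have [w1 /and3P[uw1 _]] := connect_del_rel_first_step uz zu.
  rewrite inE => w1w /(connect_del_rel_subset (subsetUl _ _)) w1z.
  by move: w1w; rewrite (branch_neighbor_uniq uw1 uw _ wz) ?eqxx // inE.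
have [-> _|zu zw] := eqVneq z u; first by rewrite inE connect0.
have [w1 uw1 w1z] := mem_branch zu.
have w1w : w1 != w by apply: contraNneq zw => <-.
have w_notin v : connect (del_rel e [set u]) w1 v -> v \notin [set w].
  move=> w1v; rewrite inE; apply: contraNneq w1w => vw; rewrite vw in w1v.
  by apply/eqP; apply: (branch_neighbor_uniq (z := w) uw1 uw);
    rewrite inE ?connect0.
rewrite inE; apply: (@connect_trans _ _ w1).
  by apply: connect1; rewrite /del_rel uw1 !inE w1w eq_sym neighbor_neq.
apply: (connect_del_rel_subset (subsetUr [set u] _)).
by rewrite inE in w1z; apply: connect_del_rel_setU w_notin w1z.
Qed.

Lemma card_branches A u :
  \sum_(w in [set y | e u y]) #|A :&: branch u w| = #|A :\ u|.
Proof.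
under eq_bigr do rewrite card_setI_sum.
rewrite exchange_big /= setDE card_setI_sum; apply: eq_bigr => z _; rewrite !inE.
have [-> /=|zu /=] := eqVneq z u.
  by rewrite big1 // => w; rewrite inE => /notin_branch /negbTE ->.
have [w0 uw0 zw0] := mem_branch zu.
rewrite (bigD1 w0) /=; last by rewrite inE.
rewrite zw0 big1 // => w /andP[]; rewrite inE => uw ww0.
have [zw|//] := boolP (z \in branch u w).
by rewrite (branch_neighbor_uniq uw uw0 zw zw0) eqxx in ww0.
Qed.

Lemma leaf_branch x w : e x w -> deg e x <= 1 -> branch x w = [set~ x].
Proof.
move=> xw degx; apply/setP => z; rewrite in_setC in_set1; apply/idP/idP.
  by apply: contraTneq => ->; apply: notin_branch.
move=> /mem_branch[w' xw' zw']; suff -> : w = w' by [].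
by move/card_le1_eqP: degx; apply; rewrite inE.
Qed.

Section OddBranches.
Variable Sout : {set V}.
Hypothesis Sout_odd : odd #|Sout|.

Definition odd_branch u w := odd #|Sout :&: branch u w|.

Lemma odd_branch_rev u w : e u w -> odd_branch w u = ~~ odd_branch u w.
Proof.
move=> uw; move: Sout_odd; rewrite /odd_branch branch_compl // -setDE.
by rewrite -(cardsID (branch u w) Sout) oddD; case: odd; case: odd.
Qed.

Lemma odd_branch_leaf x w :
  e x w -> deg e x <= 1 -> odd_branch x w = (x \notin Sout).
Proof.
move=> xw degx; move: Sout_odd; rewrite /odd_branch leaf_branch // -setDE.
by rewrite (cardsD1 x Sout) oddD; case: (x \in Sout) => /=; case: odd.
Qed.

Lemma odd_branch_deg3 u a b c : deg e u = 3 -> u \notin Sout ->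
  e u a -> e u b -> e u c -> a != b -> a != c -> b != c ->
  odd_branch u a (+) odd_branch u b (+) odd_branch u c.
Proof.
move=> degu uSout ua ub uc ab ac bc.
have Nu : [set y | e u y] = a |: (b |: [set c]).
  apply/eqP; rewrite eq_sym eqEcard; apply/andP; split.
    by apply/subsetP => z; rewrite !inE => /or3P[] /eqP ->.
  move: degu; rewrite /deg => ->.
  by rewrite !cardsU1 cards1 !inE negb_or ab ac bc.
move: Sout_odd; rewrite (cardsD1 u Sout) (negbTE uSout) -card_branches Nu.
rewrite add0n big_setU1 ?big_setU1 ?big_set1 /=; last 2 first.
- by rewrite inE.
- by rewrite !inE negb_or ab ac.
by rewrite !oddD addbA.
Qed.

Definition separator :=
  [set v | (v \notin Sout) && [forall w, e v w ==> odd_branch v w]].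

Lemma separator_independent : independent e separator.
Proof.
move=> x y; rewrite !inE => /andP[_ /forallP/(_ y) odd_xy].
move=> /andP[_ /forallP/(_ x) odd_yx]; apply/negP => xy.
by move: odd_xy odd_yx; rewrite [e y x]esym xy /= (odd_branch_rev xy) => ->.
Qed.

Lemma separator_disjoint_Sout : separator :&: Sout = set0.
Proof. by apply/setP => v; rewrite !inE; case: (v \in Sout); rewrite ?andbF. Qed.

Section Leaves.
Variable Sin : {set V}.
Hypothesis Sin_Sout_disjoint : Sin :&: Sout = set0.
Hypothesis Sin_Sout_leaves : Sin :|: Sout = leaves e.
Hypothesis deg_internal : forall x, x \notin leaves e -> deg e x = 3.

Lemma Sout_leaf x : x \in Sout -> x \in leaves e.
Proof. by rewrite -Sin_Sout_leaves inE orbC => ->. Qed.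

Lemma Sin_sub_separator : Sin \subset separator.
Proof.
apply/subsetP => x xSin; have xSout : x \notin Sout.
  by have := in_set0 x; rewrite -Sin_Sout_disjoint inE xSin => /negbT.
have : x \in leaves e by rewrite -Sin_Sout_leaves inE xSin.
rewrite !inE xSout => leaf_x; apply/forallP => w; apply/implyP => xw.
by rewrite odd_branch_leaf.
Qed.

Lemma leaf_notin_separator x :
  x \in leaves e -> x \notin separator -> x \in Sout.
Proof.
rewrite -Sin_Sout_leaves inE => /orP[xSin|//].
by rewrite (subsetP Sin_sub_separator).
Qed.

Lemma even_edge_leaf a b : del_rel e separator a b -> ~~ odd_branch a b ->
  b \notin leaves e.
Proof.
case/and3P=> ab _ bS even_ab; apply/negP => leaf_b.
have ba : e b a by rewrite esym.
have deg_b : deg e b <= 1 by rewrite inE in leaf_b.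
have := odd_branch_rev ab; rewrite (negbTE even_ab) (odd_branch_leaf ba deg_b).
by rewrite leaf_notin_separator.
Qed.

Lemma even_edge_step a b c : del_rel e separator a b -> ~~ odd_branch a b ->
  del_rel e separator b c -> a != c -> ~~ odd_branch b c.
Proof.
case/and3P=> ab _ bS even_ab /and3P[bc _ _] ac.
have ba : e b a by rewrite esym.
have internal_b : b \notin leaves e := two_neighbors_not_leaf ba bc ac.
have bSout : b \notin Sout := contra (@Sout_leaf b) internal_b.
have odd_ba : odd_branch b a by rewrite odd_branch_rev.
have [w bw even_bw] : exists2 w, e b w & ~~ odd_branch b w.
  move: bS; rewrite inE bSout negb_forall => /existsP[w].
  by rewrite negb_imply => /andP[]; exists w.
apply/negP => odd_bc.
have aw : a != w by apply: contraNneq even_bw => <-.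
have cw : c != w by apply: contraNneq even_bw => <-.
have := odd_branch_deg3 (deg_internal internal_b) bSout ba bc bw ac aw cw.
by rewrite odd_ba odd_bc (negbTE even_bw).
Qed.

Lemma even_path_last a b p : del_rel e separator a b -> ~~ odd_branch a b ->
  path (del_rel e separator) b p -> uniq [:: a, b & p] ->
  last b p \notin leaves e.
Proof.
elim: p a b => [|c p IH] a b ab even_ab /=.
  by move=> _ _; apply: even_edge_leaf ab even_ab.
case/andP=> bc cp /andP[a_bcp uniq_bcp].
have ac : a != c by apply: contraNneq a_bcp => ->; rewrite !inE eqxx orbT.
exact: IH _ _ bc (even_edge_step ab even_ab bc ac) cp uniq_bcp.
Qed.

Lemma separator_separates_leaves x y : x \in leaves e -> y \in leaves e ->
  connect (del_rel e separator) x y -> x = y.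
Proof.
move=> leaf_x leaf_y /connectP[p xp yE].
case: (shortenP xp) yE leaf_y => -[//|b q] /=.
case/andP=> xb bq uniq_xbq _ -> leaf_last; have /and3P[e_xb xS _] := xb.
have deg_x : deg e x <= 1 by rewrite inE in leaf_x.
have even_xb : ~~ odd_branch x b.
  by rewrite (odd_branch_leaf e_xb deg_x) leaf_notin_separator.
by move: (even_path_last xb even_xb bq uniq_xbq); rewrite leaf_last.
Qed.

End Leaves.
End OddBranches.
End Tree.

Theorem lemma4p32 (V : finType) (e : rel V) (Sin Sout : {set V}) :
  is_tree e ->
  (forall x : V, x \notin leaves e -> deg e x = 3) ->
  Sin :&: Sout = set0 ->
  Sin :|: Sout = leaves e ->
  odd #|Sout| ->
  exists S : {set V},
    [/\ independent e S, Sin \subset S, S :&: Sout = set0 &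
        forall x y : V, x \in leaves e -> y \in leaves e ->
          x \notin S -> y \notin S -> connect (del_rel e S) x y -> x = y].
Proof.
move=> [[esym eirr] _ econn eacyc] deg_internal Sin_Sout_disjoint Sin_Sout_leaves
  Sout_odd.
exists (separator e Sout); split.
- exact: separator_independent.
- exact: Sin_sub_separator Sin_Sout_disjoint Sin_Sout_leaves.
- exact: separator_disjoint_Sout.
- move=> x y leaf_x leaf_y _ _.
  exact: separator_separates_leaves Sin_Sout_disjoint Sin_Sout_leaves
    deg_internal x y leaf_x leaf_y.
Qed.
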